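(* Let $\varphi=\mathrm{vec}(A)$, $\varphi_0=\mathrm{vec}(A_0)$ with $A,A_0\in\mathbb{R}^{(p-r)\times r}$, $\|A\|_2<1$, $\|A_0\|_2<1$. If $$\|\sin\Theta\{U(\varphi),U(\varphi_0)\}\|_F\le\frac{(1-\|A_0\|_2^2)^2}{8(1+\|A_0\|_2^2)^2},$$ then $$\|\varphi-\varphi_0\|_2\le\sqrt2\Big\{1+\frac{32\sqrt2(1+\|A_0\|_2^2)^2}{(1-\|A_0\|_2^2)^2}\Big\}\|\sin\Theta\{U(\varphi),U(\varphi_0)\}\|_F .$$ Moreover, for all such $\varphi,\varphi_0$, $\|\sin\Theta\{U(\varphi),U(\varphi_0)\}\|_F\le4\|\varphi-\varphi_0\|_2$.
   Context: Fix $1\le r\le p$. For $A\in\mathbb{R}^{(p-r)\times r}$, $\varphi=\mathrm{vec}(A)$, $X_\varphi=\begin{bmatrix}0_{r\times r}&-A^{T}\\ A&0\end{bmatrix}$, $I_{p\times r}=\begin{bmatrix}I_r\\0\end{bmatrix}$, and $U(\varphi)=(I_p+X_\varphi)(I_p-X_\varphi)^{-1}I_{p\times r}\in\mathbb{O}(p,r)$ (Cayley parameterization; $\mathbb{O}(p,r)$ = $p\times r$ matrices with orthonormal columns). For $U,V\in\mathbb{O}(p,r)$ with singular values $\sigma_1\ge\dots\ge\sigma_r$ of $U^TV$, the canonical angles are $\theta_i=\arccos\sigma_i$ and $\|\sin\Theta(U,V)\|_F=(\sum_{i=1}^r\sin^2\theta_i)^{1/2}$. *)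

From HB Require Import structures.
From mathcomp Require Import all_boot all_order all_algebra.
From mathcomp Require Import all_classical all_reals all_analysis.
Set Implicit Arguments. Unset Strict Implicit. Unset Printing Implicit Defensive.
Import Order.TTheory GRing.Theory Num.Theory.
Local Open Scope classical_set_scope.
Local Open Scope ring_scope.

Section Defs.
Variable R : realType.

Definition eucl n (v : 'cV[R]_n) : R := Num.sqrt (\sum_i v i 0 ^+ 2).

(* vec(A): column-major stacking of the columns of A into a column vector *)
Definition vecm m n (A : 'M[R]_(m, n)) : 'cV[R]_(n * m) := (mxvec A^T)^T.

Definition opnorm m n (A : 'M[R]_(m, n)) : R :=
  sup [set eucl (A *m x) | x in [set x : 'cV[R]_n | eucl x = 1]].

(* Cayley parameterization, with p = r + q, q = p - r *)
Definition Xphi r q (A : 'M[R]_(q, r)) : 'M[R]_(r + q) :=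
  block_mx 0 (- A^T) A 0.
Definition Ipr r q : 'M[R]_(r + q, r) := col_mx 1%:M 0.
Definition Ucay r q (A : 'M[R]_(q, r)) : 'M[R]_(r + q, r) :=
  (1%:M + Xphi A) *m invmx (1%:M - Xphi A) *m Ipr r q.

Definition is_singular_values n (M : 'M[R]_n) (s : 'I_n -> R) : Prop :=
  (forall i, 0 <= s i) /\ (forall i j : 'I_n, (i <= j)%N -> s j <= s i) /\
  exists P Q : 'M[R]_n, P^T *m P = 1%:M /\ Q^T *m Q = 1%:M /\
    M = P *m diag_mx (\row_i s i) *m Q^T.

(* || sin Theta ||_F computed from singular values s of U^T V, theta_i = acos s_i *)
Definition sinThetaF n (s : 'I_n -> R) : R :=
  Num.sqrt (\sum_i (sin (acos (s i))) ^+ 2).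

End Defs.

(* All estimates use the Frobenius inner product <X, Y> of rectangular real
   matrices and its norm |X|; vec is an isometry onto the Euclidean norm, and
   the squared operator norm is encoded by [mxbound].
   - Cayley transform: with X = X_phi skew and Y = (I - X)^-1 I_{p x r} one has
     U(phi) = 2Y - I_{p x r}. Skewness gives |N| <= |(I - X) N|, so Y is a
     contraction; hence U is orthonormal and |U(A) - U(A0)|^2 <= 8 |A - A0|^2.
     Block-wise U(A) = [T; A (I + T)] with T symmetric and (I + A^T A)(I + T) = 2I,
     so (1 - c) |N|^2 <= (1 + c) <N, T N> whenever |A|_2^2 <= c.
   - Principal angles: if U^T V = P diag(s) Q^T then |sin Theta|^2 = r - sum s_i^2,
     whence |sin Theta| <= |U - V| and |U - V O| <= sqrt 2 |sin Theta| for O = Q P^T.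
   - Inverse estimate: comparing the blocks of U(A) and U(A0) O, positivity of
     T and T0 controls |I - O|, and then |A - A0| <= 2 (1 + t) |U(A) - U(A0) O|
     with t = (1 + a^2) / (1 - a^2), a = |A0|_2.
   The corollary follows by chaining these bounds; 2 (1 + t) is dominated by the
   constant of the statement. *)
From HB Require Import structures.
From mathcomp Require Import all_boot all_order all_algebra.
From mathcomp Require Import all_classical all_reals all_analysis.
From mathcomp Require Import ring lra.
Set Implicit Arguments. Unset Strict Implicit. Unset Printing Implicit Defensive.
Import Order.TTheory GRing.Theory Num.Theory.
Local Open Scope ring_scope.

Section Frobenius.
Variable R : realType.

Definition fdot m n (X Y : 'M[R]_(m, n)) : R := \sum_i \sum_j X i j * Y i j.
Definition fnorm m n (X : 'M[R]_(m, n)) : R := Num.sqrt (fdot X X).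

Lemma fdotE m n (X Y : 'M[R]_(m, n)) : fdot X Y = \tr (X^T *m Y).
Proof.
rewrite /fdot /mxtrace exchange_big; apply: eq_bigr => j _.
by rewrite mxE; apply: eq_bigr => i _; rewrite mxE.
Qed.

Lemma fdotC m n (X Y : 'M[R]_(m, n)) : fdot X Y = fdot Y X.
Proof. by apply: eq_bigr => i _; apply: eq_bigr => j _; rewrite mulrC. Qed.

Lemma fdotDl m n (X Y Z : 'M[R]_(m, n)) : fdot (X + Y) Z = fdot X Z + fdot Y Z.
Proof.
rewrite /fdot -big_split; apply: eq_bigr => i _; rewrite -big_split.
by apply: eq_bigr => j _; rewrite mxE mulrDl.
Qed.

Lemma fdotZl m n a (X Y : 'M[R]_(m, n)) : fdot (a *: X) Y = a * fdot X Y.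
Proof.
rewrite /fdot mulr_sumr; apply: eq_bigr => i _; rewrite mulr_sumr.
by apply: eq_bigr => j _; rewrite mxE mulrA.
Qed.

Lemma fdotNl m n (X Y : 'M[R]_(m, n)) : fdot (- X) Y = - fdot X Y.
Proof. by rewrite -scaleN1r fdotZl mulN1r. Qed.

Lemma fdotBl m n (X Y Z : 'M[R]_(m, n)) : fdot (X - Y) Z = fdot X Z - fdot Y Z.
Proof. by rewrite fdotDl fdotNl. Qed.

Lemma fdotDr m n (X Y Z : 'M[R]_(m, n)) : fdot Z (X + Y) = fdot Z X + fdot Z Y.
Proof. by rewrite fdotC fdotDl !(fdotC Z). Qed.

Lemma fdotZr m n a (X Y : 'M[R]_(m, n)) : fdot Y (a *: X) = a * fdot Y X.
Proof. by rewrite fdotC fdotZl fdotC. Qed.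

Lemma fdotNr m n (X Y : 'M[R]_(m, n)) : fdot Y (- X) = - fdot Y X.
Proof. by rewrite fdotC fdotNl fdotC. Qed.

Lemma fdotBr m n (X Y Z : 'M[R]_(m, n)) : fdot Z (X - Y) = fdot Z X - fdot Z Y.
Proof. by rewrite fdotDr fdotNr. Qed.

Lemma fdot0l m n (X : 'M[R]_(m, n)) : fdot 0 X = 0.
Proof. by rewrite /fdot big1 // => i _; rewrite big1 // => j _; rewrite mxE mul0r. Qed.

Lemma fdot1l n (M : 'M[R]_n) : fdot 1%:M M = \tr M.
Proof. by rewrite fdotE trmx1 mul1mx. Qed.

Lemma fdot_orth m n (U : 'M[R]_(m, n)) : U^T *m U = 1%:M -> fdot U U = n%:R.
Proof. by move=> hU; rewrite fdotE hU mxtrace1. Qed.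

Lemma fdot_ge0 m n (X : 'M[R]_(m, n)) : 0 <= fdot X X.
Proof. by apply: sumr_ge0 => i _; apply: sumr_ge0 => j _; rewrite -expr2 sqr_ge0. Qed.

Lemma fdot_eq0 m n (X : 'M[R]_(m, n)) : fdot X X = 0 -> X = 0.
Proof.
move=> X0; apply/matrixP => i j; rewrite mxE.
have row0 i' : \sum_j X i' j * X i' j = 0.
  apply: (psumr_eq0P _ X0) => // i0 _.
  by apply: sumr_ge0 => j0 _; rewrite -expr2 sqr_ge0.
have : X i j * X i j = 0.
  by apply: (psumr_eq0P _ (row0 i)) => // j0 _; rewrite -expr2 sqr_ge0.
by move=> Xij0; apply/eqP; rewrite -sqrf_eq0 expr2 Xij0.
Qed.

Lemma fdot_tr m n (X Y : 'M[R]_(m, n)) : fdot X^T Y^T = fdot X Y.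
Proof.
rewrite /fdot exchange_big; apply: eq_bigr => i _; apply: eq_bigr => j _.
by rewrite !mxE.
Qed.

Lemma fdot_mull m n k (A : 'M[R]_(m, n)) (X : 'M[R]_(n, k)) Y :
  fdot (A *m X) Y = fdot X (A^T *m Y).
Proof. by rewrite !fdotE trmx_mul mulmxA. Qed.

Lemma fdot_mulr m n k (B : 'M[R]_(n, k)) (X : 'M[R]_(m, n)) Y :
  fdot (X *m B) Y = fdot X (Y *m B^T).
Proof. by rewrite !fdotE trmx_mul -mulmxA mxtrace_mulC mulmxA. Qed.

Lemma fdot_sqrD m n (X Y : 'M[R]_(m, n)) :
  fdot (X + Y) (X + Y) = fdot X X + 2 * fdot X Y + fdot Y Y.
Proof. by rewrite !fdotDl !fdotDr (fdotC Y X); ring. Qed.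

Lemma fdot_sqrB m n (X Y : 'M[R]_(m, n)) :
  fdot (X - Y) (X - Y) = fdot X X - 2 * fdot X Y + fdot Y Y.
Proof. by rewrite !fdotBl !fdotBr (fdotC Y X); ring. Qed.

Lemma fdot_col m1 m2 n (X1 Y1 : 'M[R]_(m1, n)) (X2 Y2 : 'M[R]_(m2, n)) :
  fdot (col_mx X1 X2) (col_mx Y1 Y2) = fdot X1 Y1 + fdot X2 Y2.
Proof. by rewrite !fdotE tr_col_mx mul_row_col mxtraceD. Qed.

Lemma fdot_row m n1 n2 (X1 Y1 : 'M[R]_(m, n1)) (X2 Y2 : 'M[R]_(m, n2)) :
  fdot (row_mx X1 X2) (row_mx Y1 Y2) = fdot X1 Y1 + fdot X2 Y2.
Proof. by rewrite -fdot_tr !tr_row_mx fdot_col !fdot_tr. Qed.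

Lemma fdot_cols m n (X Y : 'M[R]_(m, n)) : fdot X Y = \sum_j fdot (col j X) (col j Y).
Proof.
rewrite /fdot exchange_big; apply: eq_bigr => j _; apply: eq_bigr => i _.
by rewrite big_ord1 !mxE.
Qed.

Lemma fdot_delta m n (i : 'I_m) (j : 'I_n) :
  fdot (delta_mx i j : 'M[R]_(m, n)) (delta_mx i j) = 1.
Proof.
rewrite /fdot (bigD1 i) //= (bigD1 j) //= !mxE !eqxx mulr1.
rewrite [X in _ + X + _]big1 ?addr0; last first.
  by move=> l hl; rewrite !mxE (negPf hl) andbF mul0r.
rewrite big1 ?addr0 // => k hk; rewrite big1 // => l _.
by rewrite !mxE (negPf hk) mul0r.
Qed.

(* Cauchy-Schwarz, via nonnegativity of the quadratic t |-> |X - tY|^2. *)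
Lemma fdot_CS m n (X Y : 'M[R]_(m, n)) : fdot X Y ^+ 2 <= fdot X X * fdot Y Y.
Proof.
have quad t : 0 <= fdot X X - 2 * t * fdot X Y + t ^+ 2 * fdot Y Y.
  by have := fdot_ge0 (X - t *: Y); rewrite fdot_sqrB !fdotZr fdotZl; nra.
have hX := fdot_ge0 X; have hY := fdot_ge0 Y.
have [Y0|Yn0] := eqVneq (fdot Y Y) 0.
  rewrite Y0 mulr0; have [->|XYn0] := eqVneq (fdot X Y) 0; first by rewrite expr0n.
  have := quad ((fdot X X + 1) / (2 * fdot X Y)); rewrite Y0 mulr0 addr0.
  have -> : 2 * ((fdot X X + 1) / (2 * fdot X Y)) * fdot X Y = fdot X X + 1.
    by field; rewrite XYn0.
  lra.
have Ypos : 0 < fdot Y Y by rewrite lt_neqAle eq_sym Yn0 hY.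
have := quad (fdot X Y / fdot Y Y).
have -> : fdot X X - 2 * (fdot X Y / fdot Y Y) * fdot X Y
          + (fdot X Y / fdot Y Y) ^+ 2 * fdot Y Y
        = (fdot X X * fdot Y Y - fdot X Y ^+ 2) / fdot Y Y by field.
by rewrite pmulr_lge0 ?invr_gt0 // subr_ge0.
Qed.

Lemma fnorm_ge0 m n (X : 'M[R]_(m, n)) : 0 <= fnorm X.
Proof. exact: sqrtr_ge0. Qed.

Lemma fnorm_sq m n (X : 'M[R]_(m, n)) : fnorm X ^+ 2 = fdot X X.
Proof. by rewrite sqr_sqrtr // fdot_ge0. Qed.

Lemma fnormN m n (X : 'M[R]_(m, n)) : fnorm (- X) = fnorm X.
Proof. by rewrite /fnorm fdotNl fdotNr opprK. Qed.

Lemma fdot_le_fnorm m n (X Y : 'M[R]_(m, n)) : fdot X Y <= fnorm X * fnorm Y.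
Proof.
have CS := fdot_CS X Y; rewrite -!fnorm_sq -exprMn in CS.
by have := mulr_ge0 (fnorm_ge0 X) (fnorm_ge0 Y); nra.
Qed.

Lemma fnormD m n (X Y : 'M[R]_(m, n)) : fnorm (X + Y) <= fnorm X + fnorm Y.
Proof.
have : fnorm (X + Y) ^+ 2 <= (fnorm X + fnorm Y) ^+ 2.
  by rewrite fnorm_sq fdot_sqrD -!fnorm_sq; have := fdot_le_fnorm X Y; nra.
by have := fnorm_ge0 X; have := fnorm_ge0 Y; have := fnorm_ge0 (X + Y); nra.
Qed.

Lemma fnorm_leZ m n k l (X : 'M[R]_(m, n)) (Y : 'M[R]_(k, l)) c : 0 <= c ->
  fdot X X <= c ^+ 2 * fdot Y Y -> fnorm X <= c * fnorm Y.
Proof.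
move=> c0 XY; rewrite /fnorm -(ger0_norm c0) -sqrtr_sqr -sqrtrM ?sqr_ge0 //.
by rewrite ler_sqrt ?mulr_ge0 ?sqr_ge0 ?fdot_ge0.
Qed.

Lemma eucl_fnorm n (v : 'cV[R]_n) : eucl v = fnorm v.
Proof.
rewrite /eucl /fnorm /fdot; congr Num.sqrt; apply: eq_bigr => i _.
by rewrite big_ord1 expr2.
Qed.

Lemma eucl_vecm m n (M : 'M[R]_(m, n)) : eucl (vecm M) = fnorm M.
Proof.
rewrite /eucl /fnorm -fdot_tr /fdot; congr Num.sqrt.
rewrite (reindex _ (curry_mxvec_bij _ _)) /= pair_bigA.
by apply: eq_bigr => [[i j]] _ /=; rewrite /vecm mxE mxvecE expr2.
Qed.

End Frobenius.

Section OperatorBound.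
Variable R : realType.

(* [mxbound B c]: multiplication by B scales squared Frobenius norms by at most
   c, i.e. the squared operator norm of B is at most c. *)
Definition mxbound m n (B : 'M[R]_(m, n)) (c : R) : Prop :=
  forall k (Z : 'M[R]_(n, k)), fdot (B *m Z) (B *m Z) <= c * fdot Z Z.

Lemma mxbound_cols m n (B : 'M[R]_(m, n)) c :
  (forall z : 'cV[R]_n, fdot (B *m z) (B *m z) <= c * fdot z z) -> mxbound B c.
Proof.
move=> Bz k Z; rewrite [fdot (B *m Z) _]fdot_cols [fdot Z Z]fdot_cols mulr_sumr.
by apply: ler_sum => j _; rewrite !colE -mulmxA; exact: Bz.
Qed.

Lemma mxbound_fdot m n (B : 'M[R]_(m, n)) : mxbound B (fdot B B).
Proof.
apply: mxbound_cols => z.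
have Bz i : (B *m z) i 0 = fdot (col i B^T) z.
  by rewrite mxE /fdot; apply: eq_bigr => k _; rewrite big_ord1 !mxE.
rewrite -[fdot B B]fdot_tr [fdot B^T B^T]fdot_cols mulr_suml [fdot (B *m z) _]/fdot.
apply: ler_sum => i _; rewrite big_ord1 -expr2 (_ : ord0 = 0) // Bz.
exact: fdot_CS.
Qed.

Lemma mxbound_tr m n (B : 'M[R]_(m, n)) c : 0 <= c -> mxbound B c -> mxbound B^T c.
Proof.
move=> c0 hB k W; set x := fdot (B^T *m W) (B^T *m W).
have ex : x = fdot W (B *m (B^T *m W)) by rewrite /x fdot_mull trmxK.
have CS := fdot_CS W (B *m (B^T *m W)); rewrite -ex in CS.
have BBW := hB _ (B^T *m W); rewrite -/x in BBW.
have x0 : 0 <= x := fdot_ge0 _; have w0 := fdot_ge0 W.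
have : x ^+ 2 <= fdot W W * (c * x) by apply: le_trans CS (ler_wpM2l w0 BBW).
by have := mulr_ge0 c0 w0; nra.
Qed.

Lemma mxbound_orth m n (U : 'M[R]_(m, n)) : U^T *m U = 1%:M -> mxbound U 1.
Proof. by move=> hU k Z; rewrite fdot_mull mulmxA hU mul1mx mul1r. Qed.

Lemma mxbound_fnorm m n k (B : 'M[R]_(m, n)) a (X : 'M[R]_(n, k)) : 0 <= a ->
  mxbound B (a ^+ 2) -> fnorm (B *m X) <= a * fnorm X.
Proof. by move=> a0 hB; apply: fnorm_leZ a0 (hB _ X). Qed.

Local Open Scope classical_set_scope.

Lemma opnorm_unit q r (A : 'M[R]_(q, r)) (x : 'cV[R]_r) :
  eucl x = 1 -> eucl (A *m x) <= opnorm A.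
Proof.
move=> x1; apply: ub_le_sup; last by exists x.
exists (fnorm A) => y [z /= z1 <-].
rewrite eucl_fnorm /fnorm ler_sqrt ?fdot_ge0 //.
apply: le_trans (mxbound_fdot A (k := 1) z) _.
by rewrite eucl_fnorm in z1; rewrite -(fnorm_sq z) z1 expr1n mulr1.
Qed.

Lemma opnorm_ge0 q r (A : 'M[R]_(q, r)) : (0 < r)%N -> 0 <= opnorm A.
Proof.
move=> r0; set e : 'cV[R]_r := delta_mx (Ordinal r0) 0.
have e1 : eucl e = 1 by rewrite eucl_fnorm /fnorm fdot_delta sqrtr1.
by apply: le_trans (opnorm_unit A e1); rewrite eucl_fnorm fnorm_ge0.
Qed.

Lemma opnorm_sqr_lt1 q r (A : 'M[R]_(q, r)) : (0 < r)%N ->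
  opnorm A < 1 -> opnorm A ^+ 2 < 1.
Proof. by move=> r0 A1; have := opnorm_ge0 A r0; nra. Qed.

Lemma opnorm_mxbound q r (A : 'M[R]_(q, r)) : mxbound A (opnorm A ^+ 2).
Proof.
apply: mxbound_cols => x; have [x0|xn0] := eqVneq (fdot x x) 0.
  by have := mxbound_fdot A x; rewrite x0 !mulr0.
have t0 : 0 < fnorm x by rewrite sqrtr_gt0 lt_neqAle eq_sym xn0 fdot_ge0.
set t := fnorm x in t0; set u := t^-1 *: x.
have u1 : eucl u = 1.
  rewrite eucl_fnorm /fnorm fdotZl fdotZr -fnorm_sq -/t mulrA -expr2 -exprMn.
  by rewrite mulVf ?gt_eqF // expr1n sqrtr1.
have Au : fdot (A *m u) (A *m u) <= opnorm A ^+ 2.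
  have := opnorm_unit A u1; rewrite eucl_fnorm -fnorm_sq.
  by have := fnorm_ge0 (A *m u); nra.
have -> : fdot (A *m x) (A *m x) = t ^+ 2 * fdot (A *m u) (A *m u).
  by rewrite /u -scalemxAr fdotZl fdotZr mulrA; field; rewrite gt_eqF.
by rewrite -(fnorm_sq x) -/t [X in _ <= X]mulrC ler_wpM2l ?sqr_ge0.
Qed.

End OperatorBound.

Section Cayley.
Variable R : realType.

(* For skew X, <N, X N> = 0, so I - X can only enlarge Frobenius norms. *)
Lemma skew_expand n k (X : 'M[R]_n) (N : 'M[R]_(n, k)) : X^T = - X ->
  fdot N N <= fdot ((1%:M - X) *m N) ((1%:M - X) *m N).
Proof.
move=> skewX; rewrite mulmxBl mul1mx fdot_sqrB.
have := fdot_mull X N N; rewrite skewX mulNmx fdotNr fdotC.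
by have := fdot_ge0 (X *m N); lra.
Qed.

(* ... and in particular I - X is invertible. *)
Lemma skew_unit n (X : 'M[R]_n) : X^T = - X -> (1%:M - X) \in unitmx.
Proof.
move=> skewX; rewrite -row_free_unit -kermx_eq0 -submx0; apply/row_subP => i.
set u := row i _.
have : u *m (1%:M - X) = 0 by apply/sub_kermxP; exact: row_sub.
rewrite mulmxBr mulmx1 => /eqP; rewrite subr_eq0 => /eqP uX.
have uXu : fdot u (u *m X) = 0.
  by have := fdot_mulr X u u; rewrite skewX mulmxN fdotNr fdotC; lra.
by rewrite submx0; apply/eqP/fdot_eq0; rewrite {2}uX.
Qed.

Variables q r : nat.
Implicit Types A : 'M[R]_(q, r).

Lemma Xphi_skew A : (Xphi A)^T = - Xphi A.
Proof.
by rewrite /Xphi tr_block_mx opp_block_mx !trmx0 !oppr0 opprK linearN /= trmxK.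
Qed.

Lemma XphiB A A0 : Xphi A - Xphi A0 = Xphi (A - A0).
Proof.
by rewrite /Xphi opp_block_mx add_block_mx !oppr0 !addr0 linearB /= opprB opprK addrC.
Qed.

Lemma fdot_Xphi A : fdot (Xphi A) (Xphi A) = 2 * fdot A A.
Proof.
rewrite /Xphi block_mxEv !fdot_col !fdot_row fdotNl fdotNr opprK fdot_tr !fdot0l.
by rewrite add0r addr0 mulr_natl mulr2n.
Qed.

Lemma Ipr_orth : (Ipr R r q)^T *m Ipr R r q = 1%:M.
Proof. by rewrite /Ipr tr_col_mx mul_row_col trmx1 mul1mx trmx0 mul0mx addr0. Qed.

(* Y = (I - X_phi)^-1 I_{p x r}, in terms of which U(phi) = 2Y - I_{p x r}. *)
Definition Ycay A := invmx (1%:M - Xphi A) *m Ipr R r q.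

Lemma Ycay_eq A : (1%:M - Xphi A) *m Ycay A = Ipr R r q.
Proof. by rewrite /Ycay mulKVmx // skew_unit // Xphi_skew. Qed.

Lemma Ucay_eq A : Ucay A = Ycay A + Ycay A - Ipr R r q.
Proof.
rewrite /Ucay -mulmxA -/(Ycay A) -(Ycay_eq A).
have -> : 1%:M + Xphi A = 1%:M + 1%:M - (1%:M - Xphi A).
  by rewrite opprB [RHS]addrC addrA subrK addrC.
by rewrite mulmxBl mulmxDl mul1mx.
Qed.

(* Y is a contraction, since (I - X) Y = I_{p x r} and I - X enlarges norms. *)
Lemma Ycay_bound A : mxbound (Ycay A) 1.
Proof.
move=> k Z; rewrite mul1r.
apply: (le_trans (skew_expand (Ycay A *m Z) (Xphi_skew A))).
by rewrite mulmxA Ycay_eq fdot_mull mulmxA Ipr_orth mul1mx.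
Qed.

Lemma Ucay_orth A : (Ucay A)^T *m Ucay A = 1%:M.
Proof.
rewrite Ucay_eq; set Y := Ycay A; set I := Ipr R r q; set X := Xphi A.
have YI : Y^T *m I = Y^T *m Y - Y^T *m (X *m Y).
  by rewrite /I -(Ycay_eq A) -/Y mulmxBl mul1mx mulmxBr.
have IY : I^T *m Y = Y^T *m Y + Y^T *m (X *m Y).
  rewrite /I -(Ycay_eq A) -/Y trmx_mul linearB /= trmx1 Xphi_skew -/X opprK.
  by rewrite -mulmxA mulmxDl mul1mx mulmxDr.
rewrite !linearB !linearD /= !mulmxBl !mulmxDl YI IY Ipr_orth.
set W := Y^T *m Y; set Z := Y^T *m (X *m Y).
have -> : W + W - (W + Z) = W - Z by rewrite opprD addrA addrK.
by rewrite opprB addrC subrK.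
Qed.

Lemma Ucay_lipschitz A A0 :
  fdot (Ucay A - Ucay A0) (Ucay A - Ucay A0) <= 8 * fdot (A - A0) (A - A0).
Proof.
set D := Ycay A - Ycay A0.
have UD : Ucay A - Ucay A0 = D + D.
  by rewrite !Ucay_eq /D; apply/matrixP => i j; rewrite !mxE; ring.
have XD : (1%:M - Xphi A) *m D = (Xphi A - Xphi A0) *m Ycay A0.
  rewrite /D mulmxBr Ycay_eq -{1}(Ycay_eq A0) -mulmxBl.
  by congr (_ *m _); rewrite opprB addrC addrA subrK.
have D_le := skew_expand D (Xphi_skew A).
rewrite XD -[X in _ <= X]fdot_tr trmx_mul XphiB in D_le.
have := mxbound_tr ler01 (Ycay_bound A0) (Xphi (A - A0))^T.
rewrite fdot_tr fdot_Xphi mul1r => XY_le.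
by rewrite UD [fdot (D + D) _]fdot_sqrD; have := fdot_ge0 D; lra.
Qed.

Lemma Ycay_blocks A : (1%:M + A^T *m A) *m usubmx (Ycay A) = 1%:M /\
  dsubmx (Ycay A) = A *m usubmx (Ycay A).
Proof.
have YI := Ycay_eq A; set Y := Ycay A in YI *.
have IX : 1%:M - Xphi A = block_mx 1%:M A^T (- A) 1%:M.
  rewrite [1%:M]scalar_mx_block /Xphi opp_block_mx add_block_mx.
  by rewrite !oppr0 !addr0 opprK !add0r.
rewrite IX -[Y]vsubmxK mul_block_col /Ipr !mul1mx in YI.
case/eq_col_mx: YI => top bot.
have Y2 : dsubmx Y = A *m usubmx Y.
  by apply/eqP; rewrite -subr_eq0 addrC -mulNmx bot.
by split=> //; rewrite mulmxDl mul1mx -mulmxA -Y2.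
Qed.

Lemma Ucay_Ycay_blocks A : let Y1 := usubmx (Ycay A) in
  Ucay A = col_mx (Y1 + Y1 - 1%:M) (A *m (Y1 + Y1)).
Proof.
move=> Y1; have YY : Ycay A = col_mx Y1 (A *m Y1).
  by rewrite -(Ycay_blocks A).2 vsubmxK.
by rewrite Ucay_eq YY /Ipr add_col_mx opp_col_mx add_col_mx oppr0 addr0 mulmxDr.
Qed.

Definition Tcay A : 'M[R]_r := usubmx (Ucay A).

Lemma Tcay_Ycay A : Tcay A = usubmx (Ycay A) + usubmx (Ycay A) - 1%:M.
Proof. by rewrite /Tcay Ucay_Ycay_blocks col_mxKu. Qed.

Lemma Ucay_col A : Ucay A = col_mx (Tcay A) (A *m (1%:M + Tcay A)).
Proof. by rewrite {1}Ucay_Ycay_blocks Tcay_Ycay [1%:M + _]addrC subrK. Qed.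

Lemma Tcay_sym A : (Tcay A)^T = Tcay A.
Proof.
rewrite Tcay_Ycay; have := (Ycay_blocks A).1.
set Y1 := usubmx _; set G := 1%:M + A^T *m A => GY.
have GT : G^T = G by rewrite /G linearD /= trmx1 trmx_mul trmxK.
have Y1T : Y1^T = Y1.
  rewrite -[Y1^T]mulmx1 -GY mulmxA -[Y1^T *m G]trmxK trmx_mul trmxK GT GY.
  by rewrite trmx1 mul1mx.
by rewrite linearB linearD /= Y1T trmx1.
Qed.

(* T is uniformly positive when |A|_2^2 <= c: writing N = Z + A^T A Z with
   Z = Y1 N, one has <N, T N> = |Z|^2 - |A^T A Z|^2 and |N|^2 expands likewise. *)
Lemma Tcay_pos A c : 0 <= c -> mxbound A c -> forall k (N : 'M[R]_(r, k)),
  (1 - c) * fdot N N <= (1 + c) * fdot N (Tcay A *m N).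
Proof.
move=> c0 hA k N; have GY := (Ycay_blocks A).1; rewrite Tcay_Ycay.
set Y1 := usubmx _ in GY *.
set Z := Y1 *m N; set W := A *m Z; set V := A^T *m W.
have NZ : N = Z + V.
  by rewrite /V /W mulmxA -[Z in Z + _]mul1mx -mulmxDl /Z mulmxA GY mul1mx.
have TN : (Y1 + Y1 - 1%:M) *m N = Z + Z - N by rewrite mulmxBl mulmxDl mul1mx.
have NdotZ : fdot N Z = fdot Z Z + fdot W W by rewrite {1}NZ fdotDl /V fdot_mull trmxK.
have NdotN : fdot N N = fdot Z Z + 2 * fdot W W + fdot V V.
  by rewrite {1 2}NZ fdot_sqrD fdotC /V fdot_mull trmxK.
rewrite TN fdotBr fdotDr NdotZ NdotN.
have hW : fdot W W <= c * fdot Z Z := hA _ Z.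
have hV : fdot V V <= c * fdot W W := mxbound_tr c0 hA W.
by move: hW hV; set u := fdot Z Z; set v := fdot W W; set w := fdot V V; nra.
Qed.

Lemma Tcay_expand A c k (M : 'M[R]_(k, r)) : 0 <= c -> c < 1 -> mxbound A c ->
  fnorm M <= fnorm (M *m (1%:M + Tcay A)).
Proof.
move=> c0 c1 hA; rewrite /fnorm ler_sqrt ?fdot_ge0 // mulmxDr mulmx1 fdot_sqrD.
have := Tcay_pos c0 hA M^T.
have -> : fdot M^T (Tcay A *m M^T) = fdot M (M *m Tcay A).
  by rewrite -fdot_tr trmx_mul trmxK Tcay_sym.
have := fdot_ge0 M^T; have := fdot_ge0 (M *m Tcay A); nra.
Qed.

End Cayley.

Section PrincipalAngles.
Variable R : realType.

Lemma fdot_diag n (d : 'rV[R]_n) : fdot (diag_mx d) (diag_mx d) = \sum_i d 0 i ^+ 2.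
Proof.
apply: eq_bigr => i _; rewrite (bigD1 i) //= big1 ?addr0.
  by rewrite !mxE eqxx mulr1n expr2.
by move=> j ji; rewrite !mxE eq_sym (negPf ji) mulr0n mul0r.
Qed.

Variables (n r : nat) (U V : 'M[R]_(n, r)) (s : 'I_r -> R) (P Q : 'M[R]_r).
Hypotheses (hU : U^T *m U = 1%:M) (hV : V^T *m V = 1%:M).
Hypotheses (hP : P^T *m P = 1%:M) (hQ : Q^T *m Q = 1%:M).
Hypotheses (hUV : U^T *m V = P *m diag_mx (\row_i s i) *m Q^T).
Hypothesis s0 : forall i, 0 <= s i.

(* The singular values of U^T V are at most 1: test U^T against the unit
   vector V Q e_i, which it maps to s_i P e_i. *)
Lemma sv_le1 i : s i <= 1.
Proof.
set e : 'cV[R]_r := delta_mx i 0; set w := V *m (Q *m e).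
have w1 : fdot w w = 1.
  by rewrite /w fdot_mull mulmxA hV mul1mx fdot_mull mulmxA hQ mul1mx fdot_delta.
have De : diag_mx (\row_i s i) *m e = s i *: e.
  apply/matrixP => k j; rewrite mul_diag_mx !mxE.
  by case: (eqVneq k i) => [->|_]; rewrite ?mulr1 ?mulr0.
have Uw : U^T *m w = s i *: (P *m e).
  rewrite /w mulmxA hUV -!mulmxA [Q^T *m _]mulmxA hQ mul1mx mulmxA.
  by rewrite -[P *m _ *m e]mulmxA De scalemxAr.
have := mxbound_tr ler01 (mxbound_orth hU) w.
rewrite Uw fdotZl fdotZr fdot_mull mulmxA hP mul1mx fdot_delta w1 !mul1r mulr1.
by have := s0 i; nra.
Qed.

(* |sin Theta|_F^2 = r - sum_i s_i^2, as sin (acos s) ^ 2 = 1 - s ^ 2. *)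
Lemma sum_sin_sq : \sum_i sin (acos (s i)) ^+ 2 = r%:R - \sum_i s i ^+ 2.
Proof.
have -> : r%:R - \sum_i s i ^+ 2 = \sum_i (1 - s i ^+ 2).
  by rewrite sumrB sumr_const card_ord.
apply: eq_bigr => i _.
have s_range : -1 <= s i <= 1 by rewrite sv_le1 andbT; have := s0 i; lra.
by rewrite sin2cos2 acosK // in_itv.
Qed.

Lemma fdot_UtV : fdot (U^T *m V) (U^T *m V) = \sum_i s i ^+ 2.
Proof.
rewrite hUV -!mulmxA fdot_mull mulmxA hP mul1mx fdot_mulr trmxK -mulmxA hQ mulmx1.
by rewrite fdot_diag; apply: eq_bigr => i _; rewrite mxE.
Qed.

(* The rotation O = Q P^T aligns V with U: tr (U^T V O) = sum_i s_i. *)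
Lemma trace_UtVO : \tr (U^T *m V *m (Q *m P^T)) = \sum_i s i.
Proof.
rewrite hUV !mulmxA -[_ *m Q^T *m Q]mulmxA hQ mulmx1 mxtrace_mulC mulmxA hP mul1mx.
by rewrite mxtrace_diag; apply: eq_bigr => i _; rewrite mxE.
Qed.

Lemma rot_orth : (Q *m P^T) *m (Q *m P^T)^T = 1%:M.
Proof.
by rewrite trmx_mul trmxK mulmxA -[Q *m P^T *m P]mulmxA hP mulmx1 mulmx1C.
Qed.

Lemma sinTheta_le_dist : sinThetaF s <= fnorm (U - V).
Proof.
rewrite /sinThetaF /fnorm ler_sqrt ?fdot_ge0 // sum_sin_sq.
have := fdot_ge0 (1%:M - U^T *m V).
rewrite [fdot (1%:M - _) _]fdot_sqrB !fdot1l mxtrace1 fdot_UtV.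
by rewrite fdot_sqrB (fdot_orth hU) (fdot_orth hV) fdotE; lra.
Qed.

Lemma aligned_dist : fnorm (U - V *m (Q *m P^T)) <= Num.sqrt 2 * sinThetaF s.
Proof.
rewrite /sinThetaF -sqrtrM // /fnorm ler_sqrt; last first.
  by rewrite mulr_ge0 // sumr_ge0 // => i _; rewrite sqr_ge0.
rewrite sum_sin_sq fdot_sqrB (fdot_orth hU) [fdot U _]fdotE mulmxA trace_UtVO.
rewrite fdot_mulr -mulmxA rot_orth mulmx1 (fdot_orth hV).
have : \sum_i s i ^+ 2 <= \sum_i s i.
  by apply: ler_sum => i _; have := s0 i; have := sv_le1 i; nra.
lra.
Qed.

End PrincipalAngles.

Section InverseBound.
Variable R : realType.

Lemma quad_rotation n (S O : 'M[R]_n) : S^T = S -> O *m O^T = 1%:M ->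
  fdot (1%:M - O) (S *m (1%:M - O)) = 2 * fdot S (1%:M - O).
Proof.
move=> symS hO; rewrite fdotC fdot_mulr linearB /= trmx1 mulmxBr mulmx1.
rewrite mulmxBl mul1mx hO.
have SOt : fdot S O^T = fdot S O by rewrite -{1}symS fdot_tr.
by rewrite !fdotBr SOt; ring.
Qed.

Lemma cancel_factor (c e k : R) : 0 <= k -> 0 <= e -> c * k ^+ 2 <= e * k -> c * k <= e.
Proof.
move=> k0 e0; have [->|kn0] := eqVneq k 0; first by move=> _; rewrite mulr0.
have kpos : 0 < k by rewrite lt_neqAle eq_sym kn0.
by rewrite expr2 mulrA ler_pM2r.
Qed.

Lemma ratio_ge1 (a : R) : a ^+ 2 < 1 -> 1 <= (1 + a ^+ 2) / (1 - a ^+ 2).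
Proof.
by move=> a1; rewrite ler_pdivlMr ?subr_gt0 // mul1r; have := sqr_ge0 a; lra.
Qed.

Variables (q r : nat) (A A0 : 'M[R]_(q, r)) (O : 'M[R]_r).
Hypotheses (r0 : (0 < r)%N) (hA : opnorm A < 1) (hA0 : opnorm A0 < 1).
Hypothesis hO : O *m O^T = 1%:M.

Local Notation a := (opnorm A0).
Local Notation T := (Tcay A).
Local Notation T0 := (Tcay A0).
Local Notation K := (1%:M - O).
Local Notation E1 := (T - T0 *m O).
Local Notation E2 := (A *m (1%:M + T) - A0 *m (1%:M + T0) *m O).

Lemma dist_blocks : Ucay A - Ucay A0 *m O = col_mx E1 E2.
Proof. by rewrite Ucay_col (Ucay_col A0) mul_col_mx opp_col_mx add_col_mx. Qed.

(* Positivity of T: <T, I - O> >= 0. *)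
Lemma T_dot_rot_ge0 : 0 <= fdot T K.
Proof.
have := Tcay_pos (sqr_ge0 (opnorm A)) (opnorm_mxbound A) K.
rewrite quad_rotation ?Tcay_sym //.
by have := opnorm_sqr_lt1 r0 hA; have := fdot_ge0 K; nra.
Qed.

(* Since T0 O = T - E1 with T, T0 symmetric: <T0, I - O> = <E1, I - O> - <T, I - O>. *)
Lemma T0_dot_rot : fdot T0 K = fdot E1 K - fdot T K.
Proof.
have T0O : T0 *m O = T - E1 by rewrite opprB addrC subrK.
have T0E : T0 = (T - E1) *m O^T by rewrite -T0O -mulmxA hO mulmx1.
have dotO : fdot T0 O = fdot (T - E1) 1%:M.
  by rewrite -fdot_tr Tcay_sym -T0O fdot_mulr mul1mx.
have dot1 : fdot T0 1%:M = fdot (T - E1) O by rewrite {1}T0E fdot_mulr mul1mx trmxK.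
by rewrite !fdotBr dotO dot1 !fdotBl; ring.
Qed.

(* Positivity of T0 then bounds the rotation defect |I - O| by |E1|. *)
Lemma rot_defect_bound : (1 - a ^+ 2) * fnorm K <= 2 * (1 + a ^+ 2) * fnorm E1.
Proof.
have a2 : 0 <= 1 + a ^+ 2 by rewrite addr_ge0 ?sqr_ge0.
apply: cancel_factor; rewrite ?fnorm_ge0 ?mulr_ge0 ?fnorm_ge0 //.
have := Tcay_pos (sqr_ge0 a) (opnorm_mxbound A0) K.
rewrite quad_rotation ?Tcay_sym // T0_dot_rot fnorm_sq -mulrA.
have := fdot_le_fnorm E1 K; have := T_dot_rot_ge0.
move: a2; set u := fdot T K; set v := fdot E1 K; set w := fnorm E1 * fnorm K.
set c := 1 + a ^+ 2; nra.
Qed.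

(* |A - A0| <= |(A - A0)(I + T)| = |E2 - A0 (I - O) - A0 E1|. *)
Lemma diff_bound : fnorm (A - A0) <= fnorm E2 + a * fnorm K + a * fnorm E1.
Proof.
have a0 := opnorm_ge0 A0 r0; have A0a := mxbound_fnorm _ a0 (opnorm_mxbound A0).
have := Tcay_expand (A - A0) (sqr_ge0 _) (opnorm_sqr_lt1 r0 hA) (opnorm_mxbound A).
have -> : (A - A0) *m (1%:M + T) = E2 - A0 *m K - A0 *m E1.
  rewrite mulmxBl !mulmxDr !mulmxN !mulmx1 !mulmxDl ?mul1mx ?mulNmx !mulmxA.
  by apply/matrixP => i j; rewrite !mxE; ring.
move/le_trans; apply; apply: (le_trans (fnormD _ _)); rewrite fnormN.
apply: lerD; last exact: A0a.
by apply: (le_trans (fnormD _ _)); rewrite fnormN; apply: lerD.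
Qed.

Lemma cayley_inverse_bound :
  fnorm (A - A0) <= 2 * (1 + (1 + a ^+ 2) / (1 - a ^+ 2)) * fnorm (Ucay A - Ucay A0 *m O).
Proof.
have a0 := opnorm_ge0 A0 r0; have a1 := opnorm_sqr_lt1 r0 hA0.
set t := (1 + a ^+ 2) / (1 - a ^+ 2); set d := fnorm (Ucay A - _).
have t1 : 1 <= t := ratio_ge1 a1.
have [E1d E2d] : fnorm E1 <= d /\ fnorm E2 <= d.
  rewrite /d /fnorm dist_blocks fdot_col !ler_sqrt ?addr_ge0 ?fdot_ge0 //.
  by have := fdot_ge0 E1; have := fdot_ge0 E2; lra.
have Kt : fnorm K <= 2 * t * fnorm E1.
  have := rot_defect_bound.
  have -> : 2 * (1 + a ^+ 2) * fnorm E1 = (1 - a ^+ 2) * (2 * t * fnorm E1).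
    by rewrite /t; field; rewrite subr_eq0 gt_eqF.
  by rewrite ler_pM2l // subr_gt0.
have Ktd : fnorm K <= 2 * t * d.
  by apply: le_trans Kt _; rewrite ler_wpM2l // mulr_ge0 //; lra.
have aK : a * fnorm K <= 2 * t * d by have := fnorm_ge0 K; nra.
have aE1 : a * fnorm E1 <= d by have := fnorm_ge0 E1; nra.
have := diff_bound; have := fnorm_ge0 (Ucay A - Ucay A0 *m O); rewrite -/d; nra.
Qed.

End InverseBound.

Lemma corollary_constant (R : realType) (a : R) : a ^+ 2 < 1 ->
  2 * (1 + (1 + a ^+ 2) / (1 - a ^+ 2))
    <= 1 + 32 * Num.sqrt 2 * (1 + a ^+ 2) ^+ 2 / (1 - a ^+ 2) ^+ 2.
Proof.
move=> a1; have t1 := ratio_ge1 a1; move: t1.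
rewrite -mulrA -expr_div_n; set t := (1 + a ^+ 2) / (1 - a ^+ 2) => t1.
have s1 : 1 <= Num.sqrt 2 :> R by rewrite -{1}sqrtr1 ler_sqrt //; lra.
nra.
Qed.

Theorem corollary1 (R : realType) (r q : nat) (hr : (0 < r)%N) :
  (forall (A A0 : 'M[R]_(q, r)) (s : 'I_r -> R),
     opnorm A < 1 -> opnorm A0 < 1 ->
     is_singular_values ((Ucay A)^T *m Ucay A0) s ->
     sinThetaF s <= (1 - opnorm A0 ^+ 2) ^+ 2 / (8 * (1 + opnorm A0 ^+ 2) ^+ 2) ->
     eucl (vecm A - vecm A0) <=
       Num.sqrt 2 * (1 + 32 * Num.sqrt 2 * (1 + opnorm A0 ^+ 2) ^+ 2
                          / (1 - opnorm A0 ^+ 2) ^+ 2) * sinThetaF s) /\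
  (forall (A A0 : 'M[R]_(q, r)) (s : 'I_r -> R),
     opnorm A < 1 -> opnorm A0 < 1 ->
     is_singular_values ((Ucay A)^T *m Ucay A0) s ->
     sinThetaF s <= 4 * eucl (vecm A - vecm A0)).
Proof.
have vecmB (A A0 : 'M[R]_(q, r)) : vecm A - vecm A0 = vecm (A - A0).
  by rewrite /vecm !linearB.
split=> A A0 s hA hA0 [s0 [_ [P [Q [hP [hQ hUV]]]]]]; rewrite vecmB eucl_vecm.
- move=> _; have a1 := opnorm_sqr_lt1 hr hA0.
  have u0 := ratio_ge1 a1; rewrite -(subr_ge0 1) in u0.
  apply: le_trans (cayley_inverse_bound hr hA hA0 (rot_orth hP hQ)) _.
  rewrite [Num.sqrt 2 * _]mulrC -[X in _ <= X]mulrA.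
  have d_le := aligned_dist (Ucay_orth A) (Ucay_orth A0) hP hQ hUV s0.
  apply: le_trans (ler_wpM2l _ d_le) _; first by lra.
  by apply: ler_wpM2r (corollary_constant a1); rewrite mulr_ge0 ?sqrtr_ge0.
- apply: le_trans (sinTheta_le_dist (Ucay_orth A) (Ucay_orth A0) hP hQ hUV s0) _.
  apply: fnorm_leZ => //; have := Ucay_lipschitz A A0.
  by have := fdot_ge0 (A - A0); lra.
Qed.
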